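(* Let $a_1,a_2\in D$ be nonzero pure quaternions with $|2a_1|\ge|a_2|$ and $N(a_2)\in N(a_1)k^{*2}$, and let $t$ be the integer with $\nu(\pi^t)=\nu(a_2)-\nu(a_1)$. Say that $r\in\mathcal{O}_D$ satisfies the $k$-star conditions if $\left(\frac{N(1-r),\,-N(a_1)}{\mathfrak{p}}\right)=-1$, $N(z)N(a_1)\in k^{*2}$ and $N(z)N(\pi^ta_1)^{-1}\in\mathcal{O}_k$, where $z=a_1-ra_1\bar r$. Let $e$ be the ramification index of $k/\mathbb{Q}_2$, $u=t+6e$, and let $\mathcal{S}\subseteq\mathcal{O}_k$ be any finite set of representatives of $\mathcal{O}_k/\pi^u\mathcal{O}_k$. Then there exists $r\in\mathcal{O}_D$ satisfying the $k$-star conditions if and only if there exists $\alpha\in\mathcal{S}\oplus\mathcal{S}\omega\oplus\mathcal{S}i\oplus\mathcal{S}i\omega\subseteq\mathcal{O}_D$ satisfying them.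
   Context: $k$ is a dyadic local field of characteristic $0$, $\mathcal{O}_k$ its integers, $\pi$ a uniformizer, $\nu_k$ its normalized valuation, $\left(\frac{x,y}{\mathfrak{p}}\right)$ the Hilbert symbol of $k$. $\Delta\in\mathcal{O}_k^*$ is a unit of minimal quadratic defect ($\Delta=1+4\delta$, $\delta\in\mathcal{O}_k^*$). $D=\left(\frac{\pi,\Delta}{k}\right)$ is the quaternion division algebra with basis $1,i,j,ij$, $i^2=\pi$, $j^2=\Delta$, $ij=-ji$; $\omega=(1+j)/2$. $N$ is the reduced norm, $q\mapsto\bar q$ the canonical involution, $|q|:=|N(q)|_k$, $\nu(q):=\nu_k(N(q))$, and $\mathcal{O}_D=\{q:|q|\le1\}=\mathcal{O}_k\oplus\mathcal{O}_k\omega\oplus\mathcal{O}_ki\oplus\mathcal{O}_ki\omega$. *)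

From HB Require Import structures.
From mathcomp Require Import all_boot all_order all_algebra.
Set Implicit Arguments. Unset Strict Implicit. Unset Printing Implicit Defensive.
Import Order.TTheory GRing.Theory Num.Theory.
Local Open Scope ring_scope.

(* normalized discrete valuation  v : k -> int  (value at 0 irrelevant) *)

Definition in_Ok (k : fieldType) (v : k -> int) (x : k) : Prop :=
  x = 0 \/ 0 <= v x.

Definition is_dyadic_local_field (k : fieldType) (v : k -> int) : Prop :=
  [pchar k] =i pred0 /\
  (forall x y : k, x != 0 -> y != 0 -> v (x * y) = v x + v y) /\
  (forall x y : k, x != 0 -> y != 0 -> x + y != 0 ->
      Num.min (v x) (v y) <= v (x + y)) /\
  (exists p : k, p != 0 /\ v p = 1) /\
  (forall u : nat -> k,
      (forall M : int, exists N : nat, forall m n : nat, (N <= m)%N -> (N <= n)%N ->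
           u m = u n \/ M <= v (u m - u n)) ->
      exists l : k, forall M : int, exists N : nat, forall n : nat, (N <= n)%N ->
           u n = l \/ M <= v (u n - l)) /\
  (* finite residue field *)
  (exists R : seq k, forall x : k, in_Ok v x ->
      exists2 r, r \in R & (x = r \/ 1 <= v (x - r))) /\
  (* dyadic: residue characteristic 2 *)
  0 < v 2.

Definition is_square_nz (k : fieldType) (x : k) : Prop :=
  exists c : k, c != 0 /\ x = c ^+ 2.

(* Hilbert symbol (a,b / p) = -1 : the form a X^2 + b Y^2 - Z^2 is
   anisotropic. *)
Definition hilbert_neg1 (k : fieldType) (a b : k) : Prop :=
  forall x y z : k, z ^+ 2 = a * x ^+ 2 + b * y ^+ 2 -> x = 0 /\ y = 0 /\ z = 0.

(* The quaternion algebra (a, b / k) with basis 1, i, j, ij            *)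

Record quat (k : Type) := Quat { q0 : k; q1 : k; q2 : k; q3 : k }.

Section Quat.
Variables (k : fieldType) (a b : k).

Definition qadd (x y : quat k) : quat k :=
  Quat (q0 x + q0 y) (q1 x + q1 y) (q2 x + q2 y) (q3 x + q3 y).
Definition qopp (x : quat k) : quat k := Quat (- q0 x) (- q1 x) (- q2 x) (- q3 x).
Definition qsub (x y : quat k) : quat k := qadd x (qopp y).
Definition qscale (c : k) (x : quat k) : quat k :=
  Quat (c * q0 x) (c * q1 x) (c * q2 x) (c * q3 x).
Definition qone : quat k := Quat 1 0 0 0.
(* multiplication with i^2 = a, j^2 = b, ij = - ji *)
Definition qmul (x y : quat k) : quat k :=
  Quat (q0 x * q0 y + a * q1 x * q1 y + b * q2 x * q2 y - a * b * q3 x * q3 y)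
       (q0 x * q1 y + q1 x * q0 y - b * q2 x * q3 y + b * q3 x * q2 y)
       (q0 x * q2 y + q2 x * q0 y + a * q1 x * q3 y - a * q3 x * q1 y)
       (q0 x * q3 y + q3 x * q0 y + q1 x * q2 y - q2 x * q1 y).
Definition qconj (x : quat k) : quat k := Quat (q0 x) (- q1 x) (- q2 x) (- q3 x).
Definition qnorm (x : quat k) : k :=
  q0 x ^+ 2 - a * q1 x ^+ 2 - b * q2 x ^+ 2 + a * b * q3 x ^+ 2.
Definition qpure (x : quat k) : Prop := q0 x = 0.
End Quat.
Arguments qone {k}.

Definition qi (k : fieldType) : quat k := Quat 0 1 0 0.
Definition qj (k : fieldType) : quat k := Quat 0 0 1 0.
Definition qomega (k : fieldType) : quat k := Quat (2^-1) 0 (2^-1) 0.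

Definition in_OD (k : fieldType) (v : k -> int) (pi Delta : k) (q : quat k) : Prop :=
  in_Ok v (qnorm pi Delta q).

Definition qval (k : fieldType) (v : k -> int) (pi Delta : k) (q : quat k) : int :=
  v (qnorm pi Delta q).

Definition kstar (k : fieldType) (v : k -> int) (pi Delta : k)
    (a1 : quat k) (t : int) (r : quat k) : Prop :=
  let z := qsub a1 (qmul pi Delta (qmul pi Delta r a1) (qconj r)) in
  hilbert_neg1 (qnorm pi Delta (qsub qone r)) (- qnorm pi Delta a1) /\
  is_square_nz (qnorm pi Delta z * qnorm pi Delta a1) /\
  in_Ok v (qnorm pi Delta z * (qnorm pi Delta (qscale (pi ^ t) a1))^-1).

Definition lattice_elt (k : fieldType) (pi Delta : k) (s0 s1 s2 s3 : k) : quat k :=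
  qadd (qadd (qscale s0 qone) (qscale s1 (qomega k)))
       (qadd (qscale s2 (qi k)) (qscale s3 (qmul pi Delta (qi k) (qomega k)))).

Definition reps_mod (k : fieldType) (v : k -> int) (pi : k) (u : int) (S : seq k) : Prop :=
  (forall s, s \in S -> in_Ok v s) /\
  (forall x, in_Ok v x -> exists s, s \in S /\ (exists y, in_Ok v y /\ x - s = pi ^ u * y) /\
       forall s', s' \in S -> (exists y, in_Ok v y /\ x - s' = pi ^ u * y) -> s' = s).

From HB Require Import structures.
From mathcomp Require Import all_boot all_order all_algebra.
From mathcomp Require Import zify ring lra.
Import Order.TTheory GRing.Theory Num.Theory.
Local Open Scope ring_scope.
Set Implicit Arguments. Unset Strict Implicit. Unset Printing Implicit Defensive.

(* In the basis [1, omega, i, i omega] of [O_D] the reduced norm reads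
   [f(x0, x1) - pi f(x2, x3)], with [f] the norm form of the unramified quadratic
   extension; as [f] only takes values of even valuation, [nu(q) >= 2u] holds iff all four
   coordinates of [q] lie in [pi^u O_k].  The k-star conditions force
   [nu(1 - r) <= 6 nu(2)] and [nu(z) - nu(a1) <= 8 nu(2)]: otherwise [N(1 + r)], or [-N] of
   the component of [r] orthogonal to [1] and [a1], would be a norm from [k(sqrt (-N a1))].
   Since [|2 a1| >= |a2|] gives [t >= 1], replacing [r] by [r - d] with [nu(d) >= 2u] only
   multiplies [N(1 - r)] and [N(z)] by squares of units (Hensel's lemma for [1 + 4 pi O_k]),
   so [r] satisfies the conditions iff its truncation with coordinates in [S] does. *)

Section QuaternionIdentities.
Variables (k : fieldType) (ca cb : k).
Local Notation N := (qnorm ca cb).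
Local Notation qm := (qmul ca cb).

Definition qpolar (x y : quat k) : k := 2 * q0 (qm x (qconj y)).

Lemma qnormM x y : N (qm x y) = N x * N y.
Proof. by case: x y => [x0 x1 x2 x3] [y0 y1 y2 y3]; rewrite /qnorm /=; ring. Qed.

Lemma qnorm_conj x : N (qconj x) = N x.
Proof. by case: x => x0 x1 x2 x3; rewrite /qnorm /=; ring. Qed.

Lemma qnormN x : N (qopp x) = N x.
Proof. by case: x => x0 x1 x2 x3; rewrite /qnorm /=; ring. Qed.

Lemma qnormD x y : N (qadd x y) = N x + qpolar x y + N y.
Proof. by case: x y => [x0 x1 x2 x3] [y0 y1 y2 y3]; rewrite /qpolar /qnorm /=; ring. Qed.

Lemma qnorm_1B x : N (qsub qone x) = 1 - 2 * q0 x + N x.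
Proof. by case: x => x0 x1 x2 x3; rewrite /qnorm /=; ring. Qed.

Lemma qnorm_1D x : N (qadd qone x) = 1 + 2 * q0 x + N x.
Proof. by case: x => x0 x1 x2 x3; rewrite /qnorm /=; ring. Qed.

Lemma qnorm_scale s x : N (qscale s x) = s ^+ 2 * N x.
Proof. by case: x => x0 x1 x2 x3; rewrite /qnorm /=; ring. Qed.

Lemma qnorm_one : N qone = 1.
Proof. by rewrite /qnorm /=; ring. Qed.

Lemma qsub_1B (r d : quat k) : qsub qone (qsub r d) = qadd (qsub qone r) d.
Proof. by case: r d => [r0 r1 r2 r3] [d0 d1 d2 d3]; rewrite /qsub /qadd /=; congr Quat; ring. Qed.

Lemma qsubKr (r x : quat k) : qsub r (qsub r x) = x.
Proof. by case: r x => [r0 r1 r2 r3] [x0 x1 x2 x3]; rewrite /qsub /qadd /=; congr Quat; ring. Qed.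

Lemma qadd_eq0 (x y : quat k) : qadd x y = Quat 0 0 0 0 -> y = qopp x.
Proof.
case: x y => [x0 x1 x2 x3] [y0 y1 y2 y3]; rewrite /qadd /qopp /= => -[] h0 h1 h2 h3.
by congr Quat; apply/eqP; rewrite -addr_eq0 addrC ?h0 ?h1 ?h2 ?h3.
Qed.

Lemma conjugation_defect_sub a r d :
  qsub a (qm (qm (qsub r d) a) (qconj (qsub r d))) =
  qadd (qsub a (qm (qm r a) (qconj r)))
    (qsub (qadd (qm (qm d a) (qconj r)) (qm (qm r a) (qconj d))) (qm (qm d a) (qconj d))).
Proof.
case: a r d => [a0 a1 a2 a3] [r0 r1 r2 r3] [d0 d1 d2 d3].
by rewrite /qsub /qadd /qmul /=; congr Quat; ring.
Qed.

Section Pure.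
Variable a : quat k.
Hypothesis a_pure : q0 a = 0.

Lemma qnorm_pure_span X Y : N (qadd (qscale X qone) (qscale Y a)) = X ^+ 2 + Y ^+ 2 * N a.
Proof. by case: a a_pure => a0 a1 a2 a3 /= ->; rewrite /qnorm /=; ring. Qed.

Lemma qnorm_conjugation_defect r :
  N (qsub a (qm (qm r a) (qconj r))) + qpolar r a ^+ 2 =
  N a * N (qsub qone r) * N (qadd qone r).
Proof.
by case: a a_pure => a0 a1 a2 a3 /= ->; case: r => r0 r1 r2 r3; rewrite /qpolar /qnorm /=; ring.
Qed.

(* [r = q0 r + orth_coef r * a + orth_part r], with [orth_part r] orthogonal to [1] and [a]. *)
Definition orth_coef r := qpolar r a / (2 * N a).
Definition orth_part r := qsub (qsub r (qscale (q0 r) qone)) (qscale (orth_coef r) a).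

Hypotheses (two_neq0 : (2 : k) != 0) (Na_neq0 : N a != 0).

Lemma qnorm_orth_sum r X Y :
  N (qadd (qadd (qscale X qone) (qscale Y a)) (orth_part r)) =
  X ^+ 2 + Y ^+ 2 * N a + N (orth_part r).
Proof.
move: Na_neq0; rewrite /orth_part /orth_coef.
case: a a_pure => a0 a1 a2 a3 /= ->; case: r => r0 r1 r2 r3.
rewrite /qpolar /qnorm /= expr2 mul0r sub0r => Na0.
by field; apply/andP.
Qed.

Lemma qnorm_orth_decomp r :
  N r = q0 r ^+ 2 + orth_coef r ^+ 2 * N a + N (orth_part r).
Proof.
move: Na_neq0; rewrite /orth_part /orth_coef.
case: a a_pure => a0 a1 a2 a3 /= ->; case: r => r0 r1 r2 r3.
rewrite /qpolar /qnorm /= expr2 mul0r sub0r => Na0.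
by field; apply/andP.
Qed.

Lemma qnorm_conjugation_orth r :
  N (qsub a (qm (qm r a) (qconj r))) = N a * ((1 - N r) ^+ 2 + 4 * N (orth_part r)).
Proof.
have polarE : qpolar r a = 2 * orth_coef r * N a by rewrite /orth_coef; field; apply/andP.
rewrite (_ : N (qsub a _) = N a * N (qsub qone r) * N (qadd qone r) - qpolar r a ^+ 2).
  by rewrite qnorm_1B qnorm_1D polarE (qnorm_orth_decomp r); ring.
by rewrite -qnorm_conjugation_defect; ring.
Qed.

End Pure.
End QuaternionIdentities.

Section NormGroup.
Variables (k : fieldType) (Na : k).

(* [X] is a norm from [k(sqrt (- Na))], or [0]. *)
Definition is_norm (X : k) : Prop :=
  exists w Z Y, w != 0 /\ X * w ^+ 2 = Z ^+ 2 + Na * Y ^+ 2.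

Lemma hilbert_neg1_not_norm X : hilbert_neg1 X (- Na) -> ~ is_norm X.
Proof.
move=> h [w [Z [Y [w0 e]]]].
have [|w_0 _] := h w Y Z; first by rewrite e; ring.
by move: w0; rewrite w_0 eqxx.
Qed.

Lemma is_norm_repr Z Y : is_norm (Z ^+ 2 + Na * Y ^+ 2).
Proof. by exists 1, Z, Y; rewrite oner_neq0 expr1n mulr1. Qed.

Lemma is_norm_divr X Y : Y != 0 -> is_norm (X * Y) -> is_norm Y -> is_norm X.
Proof.
move=> Y0 [w1 [Z1 [Y1 [w10 e1]]]] [w2 [Z2 [Y2 [w20 e2]]]].
exists (Y * w1 * w2), (Z1 * Z2 - Na * Y1 * Y2), (Z1 * Y2 + Y1 * Z2).
split; first by rewrite !mulf_neq0.
rewrite (_ : X * _ = (X * Y * w1 ^+ 2) * (Y * w2 ^+ 2)); last by ring.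
by rewrite e1 e2; ring.
Qed.

Lemma hilbert_neg1_scale X s : s != 0 -> hilbert_neg1 X (- Na) -> hilbert_neg1 (X * s ^+ 2) (- Na).
Proof.
move=> s0 h x y z e; have [|sx0 [y0 z0]] := h (s * x) y z; first by rewrite e; ring.
by split => //; move/eqP: sx0; rewrite mulf_eq0 (negbTE s0) => /eqP.
Qed.

End NormGroup.

Section Valuation.
Variables (k : fieldType) (v : k -> int).
Hypothesis vM : forall x y : k, x != 0 -> y != 0 -> v (x * y) = v x + v y.
Hypothesis vD : forall x y : k, x != 0 -> y != 0 -> x + y != 0 ->
  Num.min (v x) (v y) <= v (x + y).

(* [vge n x] means [v x >= n] with the convention [v 0 = +oo]. *)
Definition vge (n : int) (x : k) : Prop := x = 0 \/ n <= v x.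

Lemma v1 : v 1 = 0.
Proof.
have one0 : (1 : k) != 0 := oner_neq0 k.
by have := vM one0 one0; rewrite mulr1; lia.
Qed.

Lemma vN x : x != 0 -> v (- x) = v x.
Proof.
move=> x0; have m1 : (-1 : k) != 0 by rewrite oppr_eq0 oner_neq0.
have := vM m1 m1; rewrite mulrNN mulr1 v1 => vm1.
by rewrite -mulN1r vM //; lia.
Qed.

Lemma vV x : x != 0 -> v x^-1 = - v x.
Proof. by move=> x0; have := vM x0 (invr_neq0 x0); rewrite mulfV // v1; lia. Qed.

Lemma vX x n : x != 0 -> v (x ^+ n) = n%:Z * v x.
Proof.
move=> x0; elim: n => [|n IH]; first by rewrite expr0 v1 mul0r.
by rewrite exprS vM ?expf_neq0 // IH; lia.
Qed.

Lemma vXz x (t : int) : x != 0 -> v (x ^ t) = t * v x.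
Proof.
move=> x0; case: t => n; first by rewrite -exprnP vX.
by rewrite NegzE -exprnN vV ?expf_neq0 // vX //; lia.
Qed.

Lemma vgeW n m x : n <= m -> vge m x -> vge n x.
Proof. by move=> nm [->|h]; [left|right; lia]. Qed.

Lemma vge0 n : vge n 0.
Proof. by left. Qed.

Lemma vge_v x : vge (v x) x.
Proof. by right. Qed.

Lemma vge_neq0 n x : vge n x -> x != 0 -> n <= v x.
Proof. by move=> [->|//]; rewrite eqxx. Qed.

Lemma vgeD n x y : vge n x -> vge n y -> vge n (x + y).
Proof.
move=> [->|hx]; first by rewrite add0r.
move=> [->|hy]; first by rewrite addr0; right.
have [->|x0] := eqVneq x 0; first by rewrite add0r; right.
have [->|y0] := eqVneq y 0; first by rewrite addr0; right.
have [->|s0] := eqVneq (x + y) 0; first by left.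
by right; have := vD x0 y0 s0; lia.
Qed.

Lemma vgeN n x : vge n x -> vge n (- x).
Proof.
have [->|x0] := eqVneq x 0; first by rewrite oppr0; left.
by move=> [/eqP|h]; [rewrite (negbTE x0)|right; rewrite vN].
Qed.

Lemma vgeB n x y : vge n x -> vge n y -> vge n (x - y).
Proof. by move=> hx /vgeN; apply: vgeD. Qed.

Lemma vgeM n m x y : vge n x -> vge m y -> vge (n + m) (x * y).
Proof.
move=> [->|hx]; first by rewrite mul0r; left.
move=> [->|hy]; first by rewrite mulr0; left.
have [->|x0] := eqVneq x 0; first by rewrite mul0r; left.
have [->|y0] := eqVneq y 0; first by rewrite mulr0; left.
by right; rewrite vM //; lia.
Qed.

Lemma vge_divr n x c : c != 0 -> vge (n + v c) x -> vge n (x / c).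
Proof. by move=> c0 /vgeM /(_ (vge_v c^-1)); rewrite vV //; apply: vgeW; lia. Qed.

Lemma vge_mulr_inv n x c : c != 0 -> vge n (x * c) -> vge (n - v c) x.
Proof. by move=> c0 h; rewrite -(mulfK c0 x); apply: vge_divr => //; apply: vgeW h; lia. Qed.

Lemma vge_eq0 x : (forall n, vge n x) -> x = 0.
Proof. by move=> h; case: (h (v x + 1)) => // h2; lia. Qed.

Lemma unit_1D y : vge 1 y -> 1 + y != 0 /\ v (1 + y) = 0.
Proof.
move=> hy; have nz : 1 + y != 0.
  apply/eqP => /(canRL (addKr 1)); rewrite addr0 => yE.
  by move: hy; rewrite yE => -[/eqP|]; rewrite ?oppr_eq0 ?oner_eq0 // vN ?oner_neq0 // v1.
split => //.
have g0 : 0 <= v (1 + y).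
  by apply: vge_neq0 nz; apply: vgeD; [right; rewrite v1|apply: vgeW hy].
have : vge (Num.min 1 (v (1 + y))) ((1 + y) - y).
  by apply: vgeB; [apply: vgeW (vge_v _)|apply: vgeW hy]; lia.
by rewrite addrK => /vge_neq0 /(_ (oner_neq0 k)); rewrite v1; lia.
Qed.

Lemma v_add_dominant x y : x != 0 -> vge (v x + 1) y -> x + y != 0 /\ v (x + y) = v x.
Proof.
move=> x0 hy; have e : x + y = x * (1 + y / x) by rewrite mulrDr mulr1 mulrCA mulfV ?mulr1.
have [nz vz] : 1 + y / x != 0 /\ v (1 + y / x) = 0.
  by apply: unit_1D; apply: vge_divr => //; apply: vgeW hy; lia.
by rewrite e mulf_neq0 // vM // vz addr0.
Qed.

Lemma v_add_neq x y : x != 0 -> y != 0 -> v x != v y ->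
  x + y != 0 /\ v (x + y) = Num.min (v x) (v y).
Proof.
move=> x0 y0 ne; case: (ltP (v x) (v y)) => h.
  have hy : vge (v x + 1) y by right; lia.
  by have [nz ->] := v_add_dominant x0 hy; split => //; lia.
have hx : vge (v y + 1) x by right; lia.
by have [nz vyx] := v_add_dominant y0 hx; rewrite addrC; split => //; rewrite vyx; lia.
Qed.

Section Complete.
Hypothesis v_complete : forall u : nat -> k,
  (forall M : int, exists N : nat, forall m n : nat, (N <= m)%N -> (N <= n)%N ->
     u m = u n \/ M <= v (u m - u n)) ->
  exists l : k, forall M : int, exists N : nat, forall n : nat, (N <= n)%N ->
     u n = l \/ M <= v (u n - l).
Hypotheses (v2_gt0 : 0 < v 2) (two_neq0 : (2 : k) != 0).

Lemma cauchy_cvg (u : nat -> k) :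
  (forall N m : nat, (N <= m)%N -> vge (N%:Z + 1) (u m - u N)) ->
  exists l, forall M, exists N : nat, forall n : nat, (N <= n)%N -> vge M (u n - l).
Proof.
move=> cau; have [|l hl] := @v_complete u.
  move=> M; exists `|M|%N => m n hm hn.
  have : vge (`|M|%N%:Z + 1) (u m - u n).
    have -> : u m - u n = (u m - u `|M|%N) - (u n - u `|M|%N) by rewrite opprB addrA subrK.
    by apply: vgeB; apply: cau.
  case=> [/eqP|h]; first by rewrite subr_eq0 => /eqP; left.
  by right; lia.
exists l => M; have [N hN] := hl M.
by exists N => n /hN [->|h]; [rewrite subrr; left|right].
Qed.

Lemma vge1_2 : vge 1 2.
Proof. by right; lia. Qed.

(* Artin-Schreier polynomial: [Delta = 1 + 4 delta] is a square iff [asp delta] has a root. *)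
Definition asp (c w : k) : k := w ^+ 2 + w - c.

Lemma newton_step c w (n : int) : 1 <= n -> vge 0 c -> vge 0 w -> vge n (asp c w) ->
  let h := asp c w / (2 * w + 1) in
  [/\ vge 0 (w - h), vge (2 * n) (asp c (w - h)) & vge n h].
Proof.
move=> n1 hc hw hgw h.
have [D0 vD0] : 1 + 2 * w != 0 /\ v (1 + 2 * w) = 0.
  by apply: unit_1D; apply: vgeW (vgeM vge1_2 hw); lia.
rewrite addrC in D0 vD0.
have hh : vge n h by apply: vge_divr; rewrite // vD0 addr0.
have -> : asp c (w - h) = h * h by rewrite /h /asp; field.
split => //; first by apply: vgeB => //; apply: vgeW hh; lia.
by apply: vgeW (vgeM hh hh); lia.
Qed.

Fixpoint newton_seq (c w0 : k) (n : nat) : k :=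
  if n is n.+1 then let w := newton_seq c w0 n in w - asp c w / (2 * w + 1) else w0.

Lemma newton_seq_spec c w0 : vge 0 c -> vge 0 w0 -> vge 1 (asp c w0) -> forall n : nat,
  [/\ vge 0 (newton_seq c w0 n), vge (n%:Z + 1) (asp c (newton_seq c w0 n))
    & vge (n%:Z + 1) (newton_seq c w0 n.+1 - newton_seq c w0 n)].
Proof.
move=> hc h0 h1; elim=> [|n [IH1 IH2 _]].
  have [_ _ b3] := newton_step (lexx 1) hc h0 h1.
  by split => //=; rewrite addrAC subrr sub0r; apply: vgeN.
have [n1 n1'] : 1 <= n%:Z + 1 /\ 1 <= n.+1%:Z + 1 by lia.
have [a1 a2 _] := newton_step n1 hc IH1 IH2.
have a2' : vge (n.+1%:Z + 1) (asp c (newton_seq c w0 n.+1)) by apply: vgeW a2; lia.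
have [_ _ b3] := newton_step n1' hc a1 a2'.
by split => //; rewrite [newton_seq c w0 n.+2]/= addrAC subrr sub0r; apply: vgeN.
Qed.

Lemma asp_root c w0 : vge 0 c -> vge 0 w0 -> vge 1 (asp c w0) -> exists w, asp c w = 0.
Proof.
move=> hc h0 h1; set u := newton_seq c w0; have P := newton_seq_spec hc h0 h1.
have [l hl] : exists l, forall M, exists N : nat, forall n : nat, (N <= n)%N -> vge M (u n - l).
  apply: cauchy_cvg => N m /subnKC <-; elim: (m - N)%N => [|j IH].
    by rewrite addn0 subrr; left.
  rewrite addnS -[u (N + j).+1](subrK (u (N + j)%N)) -addrA; apply: vgeD => //.
  by have [_ _ h] := P (N + j)%N; apply: vgeW h; lia.
have l_int : vge 0 l.
  have [N /(_ N (leqnn N)) hN] := hl 0; have [uN _ _] := P N.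
  by rewrite -[l](subKr (u N)); apply: vgeB.
exists l; apply: vge_eq0 => M; have [N hN] := hl M; set n := maxn N `|M|%N.
have [un_int asp_un _] := P n.
have -> : asp c l = asp c (u n) - (u n - l) * (u n + l + 1) by rewrite /asp; ring.
apply: vgeB; first by apply: vgeW asp_un; have := leq_maxr N `|M|%N; lia.
have one_int : vge 0 1 by right; rewrite v1.
by have := vgeM (hN n (leq_maxl _ _)) (vgeD (vgeD un_int l_int) one_int); rewrite addr0.
Qed.

Let four_sq : (4 : k) = 2 * 2. Proof. by rewrite -natrM. Qed.

Lemma v4 : v 4 = 2 * v 2.
Proof. by rewrite four_sq vM //; lia. Qed.

Lemma four_neq0 : (4 : k) != 0.
Proof. by rewrite four_sq mulf_neq0. Qed.

(* [(2 w + 1)^2 = 1 + 4 (w^2 + w)], so roots of [asp] give square roots of units [= 1 mod 4 pi]. *)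
Lemma sqrt_1D y : vge (2 * v 2 + 1) y -> exists2 s, s != 0 & s ^+ 2 = 1 + y.
Proof.
move=> hy; have c1 : vge 1 (y / 4) by apply: vge_divr four_neq0 _; rewrite v4; apply: vgeW hy; lia.
have [|||w hw] := @asp_root (y / 4) 0.
- exact: vgeW c1.
- exact: vge0.
- by rewrite /asp expr2 mulr0 !add0r; apply: vgeN.
have sq : (2 * w + 1) ^+ 2 = 1 + y.
  have -> : y = 4 * (y / 4) by rewrite mulrC mulfVK ?four_neq0.
  by move/eqP: hw; rewrite subr_eq0 => /eqP <-; ring.
exists (2 * w + 1) => //; apply/eqP => s0.
have y1 : vge 1 y by apply: vgeW hy; lia.
have [nz _] := unit_1D y1.
by move: nz; rewrite -sq s0 expr2 mul0r eqxx.
Qed.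

Lemma perturb_by_square X E : X != 0 -> vge (2 * v 2 + 1 + v X) E ->
  exists s, [/\ s != 0, v (s ^+ 2) = 0 & X + E = X * s ^+ 2].
Proof.
move=> X0 hE; have hy : vge (2 * v 2 + 1) (E / X) by apply: vge_divr.
have [s s0 sE] := sqrt_1D hy; have y1 : vge 1 (E / X) by apply: vgeW hy; lia.
have [_ vu] := unit_1D y1.
by exists s; rewrite sE; split => //; field.
Qed.

Lemma not_norm_v_perturb Na X Z Y m : ~ is_norm Na X -> X != 0 ->
  X = Z ^+ 2 + Na * Y ^+ 2 + m -> v m <= v X + 2 * v 2.
Proof.
move=> nX X0 XE; case: (leP (v m) (v X + 2 * v 2)) => // vm; exfalso.
have [|s [s0 _ sE]] := @perturb_by_square X (- m) X0; first by apply: vgeN; right; lia.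
by apply: nX; exists s, Z, Y; split => //; rewrite -sE {1}XE; ring.
Qed.

Section Unramified.
Variables (delta Delta : k).
Hypotheses (v_delta : v delta = 0) (Delta_def : Delta = 1 + 4 * delta).
Hypothesis Delta_nsq : ~ exists c : k, c ^+ 2 = Delta.

Lemma asp_delta_neq0 w : asp delta w != 0.
Proof.
apply/eqP => hw; apply: Delta_nsq; exists (2 * w + 1).
by move/eqP: hw; rewrite Delta_def subr_eq0 => /eqP <-; ring.
Qed.

Lemma v_asp_delta w : vge 0 w -> v (asp delta w) = 0.
Proof.
move=> hw; have delta_int : vge 0 delta by right; rewrite v_delta.
have asp_int : vge 0 (asp delta w).
  by apply: vgeB => //; apply: vgeD => //; have := vgeM hw hw; rewrite expr2 addr0.
have := vge_neq0 asp_int (asp_delta_neq0 w); rewrite le_eqVlt => /orP[/eqP<-//|pos].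
have [w' /eqP] := asp_root delta_int hw (or_intror pos).
by rewrite (negbTE (asp_delta_neq0 w')).
Qed.

(* The norm form of the unramified quadratic extension [k(omega)], [omega = (1 + sqrt Delta)/2]. *)
Definition unr_norm (a b : k) : k := a ^+ 2 + a * b - delta * b ^+ 2.

Lemma unr_norm_val a b : a != 0 \/ b != 0 ->
  unr_norm a b != 0 /\ exists n, [/\ v (unr_norm a b) = 2 * n, vge n a & vge n b].
Proof.
have delta_int : vge 0 delta by right; rewrite v_delta.
move=> ab; have [b0|b0] := eqVneq b 0.
  have a0 : a != 0 by case: ab; rewrite ?b0 ?eqxx.
  have -> : unr_norm a b = a ^+ 2 by rewrite /unr_norm b0; ring.
  split; first by rewrite expf_neq0.
  by exists (v a); rewrite b0 expr2 vM //; split; [lia|exact: vge_v|exact: vge0].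
have b_dominant : vge 0 (a / b) ->
    unr_norm a b != 0 /\ exists n, [/\ v (unr_norm a b) = 2 * n, vge n a & vge n b].
  move=> ab_int; have asp0 := asp_delta_neq0 (a / b).
  have -> : unr_norm a b = b ^+ 2 * asp delta (a / b) by rewrite /unr_norm /asp; field.
  split; first by rewrite mulf_neq0 ?expf_neq0.
  exists (v b); rewrite vM ?expf_neq0 // v_asp_delta // expr2 vM //; split; [lia| |exact: vge_v].
  by rewrite -[a](divfK b0); apply: vgeW (vgeM ab_int (vge_v b)); lia.
have [a0|a0] := eqVneq a 0; first by apply: b_dominant; rewrite a0 mul0r; exact: vge0.
case: (ltP (v a) (v b)) => vab; last by apply: b_dominant; apply: vge_divr => //; right; lia.
set beta := b / a; have beta1 : vge 1 beta by apply: vge_divr => //; right; lia.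
have hu : vge 1 (beta - delta * beta ^+ 2).
  by apply: vgeB => //; rewrite expr2; apply: vgeW (vgeM delta_int (vgeM beta1 beta1)); lia.
have [u0 vu] := unit_1D hu.
have -> : unr_norm a b = a ^+ 2 * (1 + (beta - delta * beta ^+ 2)) by rewrite /unr_norm /beta; field.
split; first by rewrite mulf_neq0 ?expf_neq0.
by exists (v a); rewrite vM ?expf_neq0 // vu expr2 vM //; split; [lia|exact: vge_v|right; lia].
Qed.

Lemma unr_norm_even a b : unr_norm a b != 0 -> exists n, v (unr_norm a b) = 2 * n.
Proof.
have [/andP[/eqP-> /eqP->]|] := boolP ((a == 0) && (b == 0)).
  by rewrite /unr_norm expr2 !mul0r mulr0 subr0 addr0 eqxx.
by rewrite negb_and => /orP/unr_norm_val[_ [n [vF _ _]]] _; exists n.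
Qed.

Lemma unr_norm_ge_coord K n a b : vge K (unr_norm a b) -> 2 * n <= K + 1 -> vge n a /\ vge n b.
Proof.
move=> hK hn; have [/andP[/eqP-> /eqP->]|] := boolP ((a == 0) && (b == 0)); first by split; left.
rewrite negb_and => /orP ab.
have [F0 [m [vF ha hb]]] := @unr_norm_val a b (ab : a != 0 \/ b != 0).
have := vge_neq0 hK F0; rewrite vF => Km.
by split; [apply: vgeW ha|apply: vgeW hb]; lia.
Qed.

Lemma unr_norm_ge n a b : vge n a -> vge n b -> vge (2 * n) (unr_norm a b).
Proof.
move=> ha hb; have delta_int : vge 0 delta by right; rewrite v_delta.
rewrite /unr_norm !expr2 (_ : 2 * n = n + n); last by lia.
apply: vgeB; first by apply: vgeD; apply: vgeM.
by have := vgeM delta_int (vgeM hb hb); rewrite add0r.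
Qed.

Section Lattice.
Variable pi : k.
Hypotheses (pi_neq0 : pi != 0) (v_pi : v pi = 1).
Local Notation N := (qnorm pi Delta).
Local Notation qpol := (qpolar pi Delta).

(* Coordinates of [q] in the basis [1, omega, i, i omega] of [O_D]. *)
Definition coord0 (q : quat k) : k := q0 q - q2 q.
Definition coord1 (q : quat k) : k := 2 * q2 q.
Definition coord2 (q : quat k) : k := q1 q - q3 q.
Definition coord3 (q : quat k) : k := 2 * q3 q.

Lemma qnorm_coord q :
  N q = unr_norm (coord0 q) (coord1 q) - pi * unr_norm (coord2 q) (coord3 q).
Proof. by rewrite /qnorm /unr_norm /coord0 /coord1 /coord2 /coord3 Delta_def; ring. Qed.

(* The two summands have valuations of different parity, so neither can cancel the other. *)
Lemma qnorm_ge_split K q : vge K (N q) ->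
  vge K (unr_norm (coord0 q) (coord1 q)) /\ vge (K - 1) (unr_norm (coord2 q) (coord3 q)).
Proof.
rewrite qnorm_coord; set F1 := unr_norm _ _; set F2 := unr_norm _ _ => h.
have [F1_0|F10] := eqVneq F1 0.
  split; first by rewrite F1_0; exact: vge0.
  move/vgeN: h; rewrite F1_0 sub0r opprK mulrC => /(vge_mulr_inv pi_neq0).
  by rewrite v_pi.
have [F2_0|F20] := eqVneq F2 0.
  by split; [move: h; rewrite F2_0 mulr0 subr0|rewrite F2_0; exact: vge0].
have [m1 vF1] := unr_norm_even F10; have [m2 vF2] := unr_norm_even F20.
have piF2 : - (pi * F2) != 0 by rewrite oppr_eq0 mulf_neq0.
have v_piF2 : v (- (pi * F2)) = 1 + 2 * m2 by rewrite vN ?mulf_neq0 // vM // v_pi vF2.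
have [|sum0 vsum] := v_add_neq F10 piF2; first by rewrite vF1 v_piF2; apply/eqP; lia.
have := vge_neq0 h sum0; rewrite vsum vF1 v_piF2 => hK.
by split; right; rewrite ?vF1 ?vF2; lia.
Qed.

Lemma coord01_ge K n q : vge K (N q) -> 2 * n <= K + 1 ->
  vge n (coord0 q) /\ vge n (coord1 q).
Proof. by move=> /qnorm_ge_split[h _]; apply: unr_norm_ge_coord. Qed.

Lemma coord23_ge K n q : vge K (N q) -> 2 * n <= K ->
  vge n (coord2 q) /\ vge n (coord3 q).
Proof. by move=> /qnorm_ge_split[_ h] hn; apply: unr_norm_ge_coord h _; lia. Qed.

Lemma qnorm_ge_coord n q : vge n (coord0 q) -> vge n (coord1 q) ->
  vge n (coord2 q) -> vge n (coord3 q) -> vge (2 * n) (N q).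
Proof.
move=> h0 h1 h2 h3; rewrite qnorm_coord; apply: vgeB; first exact: unr_norm_ge.
by apply: vgeW (vgeM (vge_v pi) (unr_norm_ge h2 h3)); lia.
Qed.

Lemma qnorm_eq0 q : N q = 0 -> q = Quat 0 0 0 0.
Proof.
move=> Nq0; have hK n : vge (2 * n) (N q) by rewrite Nq0; exact: vge0.
have c01 n : vge n (coord0 q) /\ vge n (coord1 q) by apply: coord01_ge (hK n) _; lia.
have c23 n : vge n (coord2 q) /\ vge n (coord3 q) by apply: coord23_ge (hK n) _; lia.
move: (vge_eq0 (fun n => (c23 n).1)) (vge_eq0 (fun n => (c23 n).2)).
move: (vge_eq0 (fun n => (c01 n).1)) (vge_eq0 (fun n => (c01 n).2)).
case: q {Nq0 hK c01 c23} => x0 x1 x2 x3.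
rewrite /coord0 /coord1 /coord2 /coord3 /= => /eqP + /eqP + /eqP + /eqP.
rewrite !mulf_eq0 (negbTE two_neq0) /= => + /eqP x2_0 + /eqP x3_0.
by rewrite x2_0 x3_0 !subr0 => /eqP-> /eqP->.
Qed.

Lemma vge_qtrace K n w : vge K (N w) -> 2 * n <= K + 1 -> vge n (2 * q0 w).
Proof.
move=> hw /(coord01_ge hw)[h0 h1].
have -> : 2 * q0 w = 2 * coord0 w + coord1 w by rewrite /coord0 /coord1; ring.
have two_int : vge 0 2 by apply: vgeW vge1_2.
by apply: vgeD => //; have := vgeM two_int h0; rewrite add0r.
Qed.

Lemma vge_qpolar K n x y : vge K (N x * N y) -> 2 * n <= K + 1 -> vge n (qpol x y).
Proof. by rewrite -(qnorm_conj _ _ y) -qnormM; apply: vge_qtrace. Qed.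

Lemma vge_qnormD K x y : vge K (N x) -> vge K (N y) -> vge K (N (qadd x y)).
Proof.
move=> hx hy; rewrite qnormD; apply: vgeD => //; apply: vgeD => //.
by apply: vge_qpolar (vgeM hx hy) _; lia.
Qed.

Lemma coord_lattice_elt s0 s1 s2 s3 (q := lattice_elt pi Delta s0 s1 s2 s3) :
  [/\ coord0 q = s0, coord1 q = s1, coord2 q = s2 & coord3 q = s3].
Proof.
rewrite /q /lattice_elt /coord0 /coord1 /coord2 /coord3 /qomega /qi /qmul /=.
by split; field.
Qed.

Lemma coordB x y : [/\ coord0 (qsub x y) = coord0 x - coord0 y,
  coord1 (qsub x y) = coord1 x - coord1 y, coord2 (qsub x y) = coord2 x - coord2 y
  & coord3 (qsub x y) = coord3 x - coord3 y].
Proof. by rewrite /coord0 /coord1 /coord2 /coord3 /=; split; ring. Qed.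

Lemma qnormD_small x e : N x != 0 -> vge (v (N x) + 4 * v 2 + 2) (N e) ->
  exists s, [/\ s != 0, v (s ^+ 2) = 0 & N (qadd x e) = N x * s ^+ 2].
Proof.
move=> x0 he; rewrite qnormD -addrA; apply: perturb_by_square => //.
apply: vgeD; last by apply: vgeW he; lia.
by apply: vge_qpolar (vgeM (vge_v (N x)) he) _; lia.
Qed.

Section Kstar.
Variable a : quat k.
Hypotheses (a_pure : q0 a = 0) (a_neq0 : a <> Quat 0 0 0 0).
Local Notation qm := (qmul pi Delta).
Local Notation zof r := (qsub a (qm (qm r a) (qconj r))).

Lemma qnorm_a_neq0 : N a != 0.
Proof. by apply/eqP => /qnorm_eq0. Qed.

Lemma pure_span_anisotropic X Y : X ^+ 2 + N a * Y ^+ 2 = 0 -> X = 0 /\ Y = 0.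
Proof.
rewrite mulrC -qnorm_pure_span // => /qnorm_eq0.
case: a a_pure a_neq0 => b0 b1 b2 b3 /= -> anz.
rewrite /qadd /qscale /= !mulr0 mulr1 !add0r addr0 => -[-> e1 e2 e3]; split => //.
have [//|Y0] := eqVneq Y 0; case: anz; move/eqP: e1; move/eqP: e2; move/eqP: e3.
by rewrite !mulf_eq0 (negbTE Y0) /= => /eqP-> /eqP-> /eqP->.
Qed.

Lemma orth_part_not_norm r (mu := orth_part pi Delta a r) :
  N mu != 0 -> ~ is_norm (N a) (- N mu).
Proof.
move=> m0 [w [Z [Y [w0 e]]]].
set p := qadd (qscale (Z / w) qone) (qscale (Y / w) a).
have pE : N p = - N mu.
  rewrite qnorm_pure_span //; apply: (mulIf (expf_neq0 2 w0)).
  by rewrite e; field.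
have pmu0 : qadd p mu = Quat 0 0 0 0.
  by apply: qnorm_eq0; rewrite qnorm_orth_sum ?qnorm_a_neq0 // -qnorm_pure_span // pE addNr.
have : N mu + N mu = 0 by rewrite {1}(qadd_eq0 pmu0) qnormN pE addNr.
by move/eqP; rewrite -mulr2n -mulr_natl mulf_eq0 (negbTE two_neq0) (negbTE m0).
Qed.

Section KstarBounds.
Variables (t : int) (r : quat k).
Hypothesis r_kstar : kstar v pi Delta a t r.

Lemma kstar_z_neq0 : N (zof r) != 0.
Proof.
move: r_kstar => -[_ [[c [c0 cE]] _]]; apply: contraNneq c0 => Nz0.
by move/esym/eqP: cE; rewrite Nz0 mul0r expf_eq0.
Qed.

(* [N(1 - r) N(1 + r)] is a nonzero norm, by [qnorm_conjugation_defect]. *)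
Lemma kstar_norms : [/\ N (qsub qone r) != 0, N (qadd qone r) != 0,
  ~ is_norm (N a) (N (qsub qone r)) & ~ is_norm (N a) (N (qadd qone r))].
Proof.
move: r_kstar => -[K1 [[c [c0 cE]] _]]; have Na0 := qnorm_a_neq0.
have prodE : N (qsub qone r) * N (qadd qone r) =
    (c / N a) ^+ 2 + N a * (qpol r a / N a) ^+ 2.
  apply: (mulfI Na0); rewrite mulrA -qnorm_conjugation_defect //.
  by rewrite -[N (zof r)](mulfK Na0) cE; field.
have : N (qsub qone r) * N (qadd qone r) != 0.
  apply: contra_neq c0; rewrite prodE => /pure_span_anisotropic[/eqP + _].
  by rewrite mulf_eq0 invr_eq0 (negbTE Na0) orbF => /eqP.
rewrite mulf_eq0 negb_or => /andP[H0 H'0]; have nH := hilbert_neg1_not_norm K1.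
split => // nH'; apply: nH; apply: is_norm_divr H'0 _ nH'.
by rewrite prodE; apply: is_norm_repr.
Qed.

(* Otherwise [N(1 + r) = N(1 - r) + 4 (1 - q0 (1 - r))] would be [4] times a square. *)
Lemma kstar_v_1Br : v (N (qsub qone r)) <= 6 * v 2.
Proof.
have [H0 _ _ nH'] := kstar_norms; case: leP => // vH; case: nH'.
have hH : vge (v (N (qsub qone r))) (N (qsub qone r)) := vge_v _.
have tr : vge (3 * v 2 + 1) (2 * (1 - q0 r)) by apply: vge_qtrace hH _; lia.
set E := N (qsub qone r) - 2 * (2 * (1 - q0 r)).
have hE : vge (2 * v 2 + 1 + v 4) E.
  rewrite v4; apply: vgeB; first by apply: vgeW hH; lia.
  by apply: vgeW (vgeM (vge_v 2) tr); lia.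
have [s [_ _ sE]] := perturb_by_square four_neq0 hE.
exists 1, (2 * s), 0; split; first exact: oner_neq0.
rewrite (_ : N (qadd qone r) = 4 + E); first by rewrite sE; ring.
by rewrite /E qnorm_1D qnorm_1B; ring.
Qed.

Lemma kstar_orth_part (m := N (orth_part pi Delta a r)) :
  [/\ m != 0, ~ is_norm (N a) (- m),
      v m <= v (N (qsub qone r)) + 2 * v 2 & v m <= v (N (qadd qone r)) + 2 * v 2].
Proof.
have [H0 H'0 nH nH'] := kstar_norms; set l := orth_coef pi Delta a r.
have NrE := qnorm_orth_decomp a_pure two_neq0 qnorm_a_neq0 r.
have EH : N (qsub qone r) = (1 - q0 r) ^+ 2 + N a * l ^+ 2 + m.
  by rewrite qnorm_1B NrE -/m -/l; ring.
have EH' : N (qadd qone r) = (1 + q0 r) ^+ 2 + N a * l ^+ 2 + m.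
  by rewrite qnorm_1D NrE -/m -/l; ring.
have m0 : m != 0 by apply/eqP => m_0; apply: nH; rewrite EH m_0 addr0; apply: is_norm_repr.
split => //; first exact: orth_part_not_norm.
- exact: not_norm_v_perturb nH H0 EH.
- exact: not_norm_v_perturb nH' H'0 EH'.
Qed.

Lemma kstar_v_z : v (N (zof r)) - v (N a) <= 8 * v 2.
Proof.
have Na0 := qnorm_a_neq0; have Nz0 := kstar_z_neq0.
have [m0 nm vmH vmH'] := kstar_orth_part; set m := N (orth_part _ _ _ _) in m0 nm vmH vmH'.
have := qnorm_conjugation_orth a_pure two_neq0 Na0 r; rewrite -/m.
set A := 1 - N r; set Q := A ^+ 2 + 4 * m => QE.
have Q0 : Q != 0 by apply: contraNneq Nz0; rewrite QE => ->; rewrite mulr0.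
have -> : v (N (zof r)) - v (N a) = v Q by rewrite QE vM //; lia.
have m40 : 4 * m != 0 by rewrite mulf_neq0 ?four_neq0.
have v4m : v (4 * m) = 2 * v 2 + v m by rewrite vM ?four_neq0 // v4.
case: (leP (v (4 * m)) (6 * v 2)) => h4.
  (* Otherwise [A^2 = - 4 m + Q] would make [- m] a square. *)
  case: leP => // vQ; case: nm; have nm40 : - (4 * m) != 0 by rewrite oppr_eq0.
  have [|s [s0 _ sE]] := @perturb_by_square (- (4 * m)) Q nm40.
    by right; rewrite vN //; lia.
  exists (2 * s), A, 0; split; first by rewrite mulf_neq0.
  rewrite (_ : - m * (2 * s) ^+ 2 = - (4 * m) * s ^+ 2); last by ring.
  by rewrite -sE /Q; ring.
(* Now [N(1 - r) + N(1 + r) = 4 - 2 A] is divisible by [4 pi], so [v A = v 2]. *)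
have vH : vge (2 * v 2 + 1) (N (qsub qone r)) by right; lia.
have vH' : vge (2 * v 2 + 1) (N (qadd qone r)) by right; lia.
have y1 : vge 1 (- (N (qsub qone r) + N (qadd qone r)) / 4).
  by apply: vge_divr four_neq0 _; rewrite v4; apply: vgeN; apply: vgeW (vgeD vH vH'); lia.
have [u0 vu] := unit_1D y1.
have AE : A = 2 * (1 + - (N (qsub qone r) + N (qadd qone r)) / 4).
  by rewrite /A qnorm_1B qnorm_1D; field; exact: four_neq0.
have A0 : A != 0 by rewrite AE mulf_neq0.
have vA2 : v (A ^+ 2) = 2 * v 2 by rewrite expr2 vM // AE vM // vu; ring.
have [|_ ->] := @v_add_dominant (A ^+ 2) (4 * m) (expf_neq0 2 A0).
  by right; rewrite vA2; lia.
by rewrite vA2; lia.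
Qed.

End KstarBounds.

(* By [kstar_v_1Br] and [kstar_v_z], such a [d] changes [N(1 - r)] and [N(z)] by unit squares. *)
Lemma kstar_perturb t r d : 1 <= t -> vge 0 (N r) -> kstar v pi Delta a t r ->
  vge (2 * (t + 6 * v 2)) (N d) -> kstar v pi Delta a t (qsub r d).
Proof.
move=> t1 hr K hd; have [H0 _ _ _] := kstar_norms K; have vH := kstar_v_1Br K.
have Nz0 := kstar_z_neq0 K; have vz := kstar_v_z K.
move: K => [K1 [[c [c0 cE]] K3]].
have [|s [s0 _ sE]] := qnormD_small (e := d) H0 (vgeW _ hd); first by lia.
set E := qsub (qadd (qm (qm d a) (qconj r)) (qm (qm r a) (qconj d))) (qm (qm d a) (qconj d)).
have hE : vge (v (N a) + 2 * (t + 6 * v 2)) (N E).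
  rewrite /E /qsub; apply: vge_qnormD; first apply: vge_qnormD;
    rewrite ?qnormN !qnormM !qnorm_conj.
  - by apply: vgeW (vgeM (vgeM hd (vge_v (N a))) hr); lia.
  - by apply: vgeW (vgeM (vgeM hr (vge_v (N a))) hd); lia.
  - by apply: vgeW (vgeM (vgeM hd (vge_v (N a))) hd); lia.
have [|s2 [s20 vs2 s2E]] := qnormD_small (e := E) Nz0 (vgeW _ hE); first by lia.
split; [|split].
- by rewrite qsub_1B sE; apply: hilbert_neg1_scale.
- exists (c * s2); split; first by rewrite mulf_neq0.
  by rewrite conjugation_defect_sub s2E exprMn -cE; ring.
- rewrite conjugation_defect_sub s2E mulrAC.
  have s2_int : vge 0 (s2 ^+ 2) by right; rewrite vs2.
  by have := vgeM K3 s2_int; rewrite addr0.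
Qed.

Lemma kstar_reps_equiv t S : 1 <= t -> reps_mod v pi (t + 6 * v 2) S ->
  (exists r, in_OD v pi Delta r /\ kstar v pi Delta a t r) <->
  (exists s0 s1 s2 s3, [/\ s0 \in S, s1 \in S, s2 \in S & s3 \in S] /\
     kstar v pi Delta a t (lattice_elt pi Delta s0 s1 s2 s3)).
Proof.
move=> t1 [S_int S_reps]; set u := t + 6 * v 2.
have pi_u_mul y : in_Ok v y -> vge u (pi ^ u * y).
  by move=> hy; have := vgeM (vge_v (pi ^ u)) hy; rewrite vXz // v_pi mulr1 addr0.
split=> [[r [r_int K]]|[s0 [s1 [s2 [s3 [[h0 h1 h2 h3] K]]]]]]; last first.
  exists (lattice_elt pi Delta s0 s1 s2 s3); split => //.
  have [l0 l1 l2 l3] := coord_lattice_elt s0 s1 s2 s3.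
  have := @qnorm_ge_coord 0 (lattice_elt pi Delta s0 s1 s2 s3).
  by rewrite l0 l1 l2 l3 mulr0; apply; apply: S_int.
have [|c0 c1] := @coord01_ge 0 0 r r_int; first by [].
have [|c2 c3] := @coord23_ge 0 0 r r_int; first by [].
have [p0 [p0S [[y0 [y0_int e0]] _]]] := S_reps _ c0.
have [p1 [p1S [[y1 [y1_int e1]] _]]] := S_reps _ c1.
have [p2 [p2S [[y2 [y2_int e2]] _]]] := S_reps _ c2.
have [p3 [p3S [[y3 [y3_int e3]] _]]] := S_reps _ c3.
exists p0, p1, p2, p3; split => //; set al := lattice_elt pi Delta p0 p1 p2 p3.
have [l0 l1 l2 l3] := coord_lattice_elt p0 p1 p2 p3; have [d0 d1 d2 d3] := coordB r al.
rewrite -(qsubKr r al); apply: kstar_perturb => //.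
by apply: qnorm_ge_coord; rewrite ?d0 ?d1 ?d2 ?d3 ?l0 ?l1 ?l2 ?l3 ?e0 ?e1 ?e2 ?e3; apply: pi_u_mul.
Qed.

End Kstar.
End Lattice.
End Unramified.
End Complete.
End Valuation.

Theorem theorem4
  (k : fieldType) (v : k -> int) (pi delta Delta : k)
  (hk : is_dyadic_local_field v)
  (hpi : pi != 0 /\ v pi = 1)
  (hdelta : delta != 0 /\ v delta = 0)
  (hDelta : Delta = 1 + 4 * delta)
  (hDelta_nsq : ~ exists c : k, c ^+ 2 = Delta)
  (a1 a2 : quat k)
  (ha1 : qpure a1 /\ a1 <> Quat 0 0 0 0)
  (ha2 : qpure a2 /\ a2 <> Quat 0 0 0 0)
  (h12 : qval v pi Delta (qscale 2 a1) <= qval v pi Delta a2)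
  (hN : exists c : k, c != 0 /\ qnorm pi Delta a2 = qnorm pi Delta a1 * c ^+ 2)
  (t : int)
  (ht : qval v pi Delta (qscale (pi ^ t) qone) = qval v pi Delta a2 - qval v pi Delta a1)
  (S : seq k)
  (hS : reps_mod v pi (t + 6 * v 2) S) :
  (exists r : quat k, in_OD v pi Delta r /\ kstar v pi Delta a1 t r) <->
  (exists s0 s1 s2 s3 : k, [/\ s0 \in S, s1 \in S, s2 \in S & s3 \in S] /\
      kstar v pi Delta a1 t (lattice_elt pi Delta s0 s1 s2 s3)).
Proof.
have [pchar0 [vM [vD [_ [v_complete [_ v2_gt0]]]]]] := hk.
have two_neq0 : (2 : k) != 0 by have := pchar0 2%N; rewrite !inE /= => ->.
case: hpi hdelta ha1 => pi_neq0 v_pi [_ v_delta] [a1_pure a1_neq0].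
have Na1_neq0 := qnorm_a_neq0 vM vD v_complete v2_gt0 two_neq0 v_delta hDelta hDelta_nsq
  pi_neq0 v_pi a1_neq0.
(* [nu(2 a1) <= nu(a2)] forces [t >= v 2 >= 1]. *)
have t_ge1 : 1 <= t.
  have pit_neq0 : pi ^ t != 0 by rewrite expfz_neq0.
  move: h12 ht; rewrite /qval !qnorm_scale qnorm_one mulr1 vM ?expf_neq0 //.
  by rewrite !vX // vXz // v_pi; lia.
exact (kstar_reps_equiv vM vD v_complete v2_gt0 two_neq0 v_delta hDelta hDelta_nsq
  pi_neq0 v_pi a1_pure a1_neq0 t_ge1 hS).
Qed.
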